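(* Let $E_0$ be a vertex of a weighted tree and let $\Delta$ be a chain of $(-2)$-vertices $F_1,\dots,F_n$ ($F_j$ adjacent to $F_{j+1}$) such that $E_0$ is adjacent to $F_k$ and to no other vertex of $\Delta$, where $k\ge1$ and $n\ge 2k-1$ (configuration $A_n^k$). Let $(m^{(1)},m^{(2)},\dots)$ be the multiplicity sequence of $\Delta$ at $E_0$. Then: (i) if $k=1$, the sequence is periodic: $(1^n,0,1^n,0,\dots)$; (ii) if $k\ge2$, write $n=lk+r+(k-1)$ with $l\ge1$, $0\le r\le k-1$. If $r<k-1$ the sequence begins $(k^l,r)$; if $r=k-1$ and $k\ge3$ it begins $(k^l,k-1,1)$; if $k=2$ and $r=1$ (so $n=2l+2$) it begins $(2^l,1,1,2^l,0)$. Here $a^l$ denotes $l$ consecutive entries equal to $a$.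
   Context: Let $E_0$ be a vertex and $\Delta$ a connected set of $(-2)$-vertices (each $F\in\Delta$ has $F\cdot F=-2$, adjacent vertices intersect with $1$, others with $0$), with $E_0$ adjacent to exactly one vertex $f\in\Delta$. The multiplicity sequence of $\Delta$ at $E_0$ is defined as follows. Let $\Gamma^{(1)}=\Delta$. Given a connected subset $\Gamma^{(s)}\subseteq\Delta$ containing $f$, let $Y^{(s)}$ be the smallest nonzero cycle supported on $\Gamma^{(s)}$ with $(E_0+Y^{(s)})\cdot F\le 0$ for all $F\in\Gamma^{(s)}$; if $\Gamma^{(s)}$ is empty put $Y^{(s)}=0$. Put $Z^{(1)}=E_0+Y^{(1)}$ and $Z^{(s+1)}=Z^{(s)}+E_0+Y^{(s+1)}$, where $\Gamma^{(s+1)}$ is the connected component containing $f$ of the set $\{F\in\Delta: Z^{(s)}\cdot F=0\}$ (empty if $f$ is not in this set). Then $m^{(s)}$ is the coefficient of $Y^{(s)}$ at $f$. *)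

From Stdlib Require Import ClassicalEpsilon.
From mathcomp Require Import all_boot all_order all_algebra.
Set Implicit Arguments. Unset Strict Implicit. Unset Printing Implicit Defensive.
Import Order.TTheory GRing.Theory Num.Theory.

(* General setting: the vertices of Delta form a finite type V with a
   (symmetric, irreflexive) adjacency relation adj; every vertex of Delta is
   a (-2)-vertex; E_0 is adjacent to exactly the vertex f of Delta.
   A cycle supported on Delta is a function V -> nat (coefficients). *)
Section MultSeq.
Variables (V : finType) (adj : rel V) (f : V).

Local Open Scope ring_scope.

Definition inter (G F : V) : int :=
  if G == F then -2 else if adj G F then 1 else 0.

(* (a E_0 + Y) . F  for F in Delta *)
Definition zdot (a : nat) (Y : V -> nat) (F : V) : int :=
  ((a * (F == f))%N)%:Z + \sum_(G : V) (Y G)%:Z * inter G F.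

Definition admissibleY (Gam : {set V}) (Y : V -> nat) : Prop :=
  (forall v, v \notin Gam -> Y v = 0%N) /\ (exists v, Y v <> 0%N) /\
  (forall F, F \in Gam -> zdot 1 Y F <= 0).

Definition smallestY (Gam : {set V}) (Y : V -> nat) : Prop :=
  admissibleY Gam Y /\ forall Y', admissibleY Gam Y' -> forall v, (Y v <= Y' v)%N.

Definition minY (Gam : {set V}) : V -> nat :=
  if Gam == set0 then (fun _ => 0%N)
  else epsilon (inhabits (fun _ => 0%N)) (smallestY Gam).

Definition compf (S : {set V}) : {set V} :=
  [set y | (f \in S) && connect (fun a b => [&& a \in S, b \in S & adj a b]) f y].

(* state s = (Gamma^(s+1), Y^(1) + ... + Y^(s)) ;
   Z^(s) = s E_0 + Y^(1) + ... + Y^(s) *)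
Fixpoint state (s : nat) : {set V} * (V -> nat) :=
  match s with
  | 0 => (setT, fun _ => 0%N)
  | s'.+1 =>
      let acc' := fun v => ((state s').2 v + minY (state s').1 v)%N in
      (compf [set F | zdot s'.+1 acc' F == 0], acc')
  end.

(* mseq s = m^(s+1)  (0-based indexing of the multiplicity sequence) *)
Definition mseq (s : nat) : nat := minY (state s).1 f.

End MultSeq.

(* The chain F_1 - ... - F_n, with F_j represented by the ordinal j-1. *)
Definition chain_adj (n : nat) : rel 'I_n :=
  fun i j => ((nat_of_ord i).+1 == j) || ((nat_of_ord j).+1 == i).

(* The chain is F_0, ..., F_n (F_i is F_(i+1) of the paper) and E_0 is attached
   to f = k - 1.  The whole iteration is driven by a single defect vertex x:
   Z^(s).F = -1 if F = x and 0 otherwise (x past the end meaning no defect).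
   Removing x leaves the side of f, a segment [a, b) of the chain, as
   Gamma^(s+1).  On a segment the smallest admissible cycle is the tent through
   f: any admissible cycle is discretely concave with a kink at f and vanishes
   just outside, so a discrete maximum principle puts it above the tent.  As
   E_0 + tent again meets the chain in a single defect, m^(s) is the tent
   height and the defect moves by an explicit map: far above f it drops by k
   (the runs k^l), just above f it jumps below f, and from f it returns to no
   defect (the zeros). *)

From mathcomp Require Import all_boot all_order all_algebra zify.
From Stdlib Require Import ClassicalEpsilon.
Import Order.TTheory GRing.Theory Num.Theory.
Set Implicit Arguments. Unset Strict Implicit. Unset Printing Implicit Defensive.

Local Open Scope ring_scope.

Lemma slope_lb (H : nat -> int) (d : int) (i j : nat) : (i <= j)%N ->
  (forall t, (i <= t < j)%N -> d <= H t.+1 - H t) -> H i + (j - i)%:R * d <= H j.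
Proof.
move=> hij hd; rewrite -lerBrDl -telescope_sumr // mulr_natl -sumr_const_nat.
exact: ler_sum_nat.
Qed.

Lemma slope_ub (H : nat -> int) (d : int) (i j : nat) : (i <= j)%N ->
  (forall t, (i <= t < j)%N -> H t.+1 - H t <= d) -> H j <= H i + (j - i)%:R * d.
Proof.
move=> hij hd; rewrite -lerBlDl -telescope_sumr // mulr_natl -sumr_const_nat.
exact: ler_sum_nat.
Qed.

(* A discrete concave function on 0 .. L.+1, vanishing at both ends, whose
   second difference is at most -1 at the kink f' (and at most 0 elsewhere),
   is bounded below by a tent: this is what makes the tent cycles minimal. *)
Section ConcaveBound.
Variables (H : nat -> int) (L f' : nat).
Hypotheses (f'_gt0 : (1 <= f')%N) (f'_leL : (f' <= L)%N).
Hypotheses (H0 : H 0 = 0) (HL : H L.+1 = 0).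
Hypothesis H_concave :
  forall j, (1 <= j <= L)%N -> H j.-1 + H j.+1 + (j == f')%:R <= 2 * H j.

Local Notation slope j := (H j.+1 - H j).

Lemma slope_antitone_kink i j : (i <= j <= L)%N ->
  slope j + ((i < f') && (f' <= j))%N%:R <= slope i.
Proof.
elim: j => [|j IH] /andP[hij hjL].
  have -> : i = 0%N by lia.
  by rewrite (_ : (f' <= 0)%N = false) ?andbF ?addr0 //; lia.
have [hji|hij'] := ltnP j i.
  have -> : i = j.+1 by lia.
  by rewrite (_ : ((j.+1 < f') && (f' <= j.+1))%N = false) ?addr0 //; lia.
have := H_concave (j := j.+1) ltac:(lia); have := IH ltac:(lia); rewrite /=.
by case: (ltnP i f') => ?; case: (leqP f' j) => ?; case: (leqP f' j.+1) => ?;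
  case: eqP => ? /=; lia.
Qed.

Lemma slope_antitone i j : (i <= j <= L)%N -> ((j < f') || (f' <= i))%N ->
  slope j <= slope i.
Proof.
move=> hij hf; have := slope_antitone_kink hij.
by case: (ltnP i f') => ?; case: (leqP f' j) => ? /=; lia.
Qed.

Lemma slope_kink i j : (i < f')%N -> (f' <= j <= L)%N -> slope j + 1 <= slope i.
Proof.
move=> hi /andP[hj hjL]; have := @slope_antitone_kink i j ltac:(lia).
by rewrite hi hj.
Qed.

Lemma concave_lb j : (1 <= j <= L)%N ->
  (minn (minn j (L.+1 - j)) (minn f' (L.+1 - f')))%:R <= H j.
Proof.
move=> /andP[j_gt0 j_leL].
have [j_lef|f_ltj] := leqP j f'.
- have [rise|flat] := lerP 1 (slope j.-1).
  + (* all slopes before j are >= 1, so H j >= j *)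
    have := @slope_lb H 1 0 j (leq0n j) (fun t ht =>
      le_trans rise (@slope_antitone t j.-1 ltac:(lia) ltac:(lia))).
    by rewrite H0; lia.
  + (* H is nonincreasing from j to f' and decreasing with slope <= -1 after *)
    have h1 := @slope_ub H 0 j f' j_lef (fun t ht =>
      ltac:(have := @slope_antitone j.-1 t ltac:(lia) ltac:(lia); lia)).
    have h2 := @slope_ub H (-1) f' L.+1 ltac:(lia) (fun t ht =>
      ltac:(have := @slope_kink j.-1 t ltac:(lia) ltac:(lia); lia)).
    by move: h1 h2; rewrite HL; lia.
- have [fall|up] := lerP (slope j) (-1).
  + have := @slope_ub H (-1) j L.+1 ltac:(lia) (fun t ht =>
      le_trans (@slope_antitone j t ltac:(lia) ltac:(lia)) fall).
    by rewrite HL; lia.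
  + have h1 := @slope_lb H 0 f' j ltac:(lia) (fun t ht =>
      ltac:(have := @slope_antitone t j ltac:(lia) ltac:(lia); lia)).
    have h2 := @slope_lb H 1 0 f' (leq0n _) (fun t ht =>
      ltac:(have := @slope_kink t j ltac:(lia) ltac:(lia); lia)).
    by move: h1 h2; rewrite H0; lia.
Qed.
End ConcaveBound.

Local Close Scope ring_scope.

Definition tent (a b c i : nat) : nat :=
  if i < a then 0 else if i < a + c then i.+1 - a else if i < b - c then c
  else b - i.

Definition tent_height (a b f : nat) : nat := minn (f.+1 - a) (b - f).

(* The vertex where E_0 + tent meets the chain negatively: the first vertex
   past the plateau on the side away from f (the plateau starts at f). *)
Definition tent_defect (a b f : nat) : nat :=
  if f.+1 - a <= b - f then b - (f.+1 - a) else a + (b - f) - 1.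

Section Tent.
Variables (a b f : nat).
Hypothesis f_in : a <= f < b.
Local Notation c := (tent_height a b f).
Local Notation x := (tent_defect a b f).

Lemma tent_laplacian i :
  (i == f) + (0 < i) * tent a b c i.-1 + tent a b c i.+1 + (i == x) =
  2 * tent a b c i + (i.+1 == a) + (i == b).
Proof.
move: f_in => /andP[af fb]; rewrite /tent /tent_defect /tent_height.
case: (leqP (f.+1 - a) (b - f)) => hpq; case: i => [|i] /=;
  repeat (case: ifP => ?); lia.
Qed.

Lemma tent_out i : ~~ (a <= i < b) -> tent a b c i = 0.
Proof.
rewrite /tent /tent_height => hi.
by case: ifP => // ?; case: ifP => ?; [lia|]; case: ifP => ?; lia.
Qed.

Lemma tent_at_peak : tent a b c f = c.
Proof.
move: f_in => /andP[af fb]; rewrite /tent /tent_height.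
by case: (leqP (f.+1 - a) (b - f)) => h; rewrite ifF; try lia;
  case: ifP => ?; try lia; case: ifP => ?; lia.
Qed.

Lemma tent_height_gt0 : 0 < c.
Proof. by move: f_in; rewrite /tent_height; lia. Qed.

(* The tent stays below the bound of [concave_lb] for [a, b) re-indexed from 1
   (kink at f.+1 - a), so that bound forces any admissible cycle above it. *)
Lemma tent_le i : a <= i < b ->
  tent a b c i <= minn (minn (i - a).+1 ((b - a).+1 - (i - a).+1))
                       (minn (f.+1 - a) ((b - a).+1 - (f.+1 - a))).
Proof.
move: f_in => /andP[af fb] /andP[ai ib]; rewrite !leq_min /tent /tent_height.
by case: (leqP (f.+1 - a) (b - f)) => h;
  case: ifP => ?; try lia; case: ifP => ?; try lia; case: ifP => ?; lia.
Qed.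
End Tent.

Local Open Scope ring_scope.

Lemma zdot_add (V : finType) (adj : rel V) (f : V) (a b : nat) (Y1 Y2 : V -> nat)
    (F : V) :
  zdot adj f (a + b) (fun v => (Y1 v + Y2 v)%N) F =
  zdot adj f a Y1 F + zdot adj f b Y2 F.
Proof.
rewrite /zdot mulnDl PoszD addrACA; congr (_ + _).
by rewrite -big_split; apply: eq_bigr => G _; rewrite PoszD mulrDl.
Qed.

Lemma zdot_ext (V : finType) (adj : rel V) (f : V) (a : nat) (Y Y' : V -> nat)
    (F : V) :
  Y =1 Y' -> zdot adj f a Y F = zdot adj f a Y' F.
Proof. by move=> eqY; rewrite /zdot; congr (_ + _); apply: eq_bigr => G _; rewrite eqY. Qed.

Local Close Scope ring_scope.

Section Chain.
Variables (n : nat) (f : 'I_n.+1).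
Local Notation adj := (@chain_adj n.+1).
Local Open Scope ring_scope.

Definition extend (Y : 'I_n.+1 -> nat) (i : nat) : nat :=
  if (i < n.+1)%N then Y (inord i) else 0%N.

Lemma extend_ord (Y : 'I_n.+1 -> nat) (F : 'I_n.+1) : extend Y F = Y F.
Proof. by rewrite /extend ltn_ord inord_val. Qed.

Lemma sum_indicator (Y : 'I_n.+1 -> nat) (c : nat) :
  \sum_(G : 'I_n.+1) (Y G)%:Z * (nat_of_ord G == c)%:R = (extend Y c)%:Z.
Proof.
rewrite /extend; case: ifP => hc.
  rewrite (bigD1 (inord c)) //= inordK // eqxx mulr1 big1 ?addr0 // => G hG.
  by case: eqP; rewrite ?mulr0 // => E; move: hG; rewrite -E inord_val eqxx.
rewrite big1 // => G _; case: eqP; rewrite ?mulr0 // => E.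
by move: (ltn_ord G); rewrite E hc.
Qed.

Lemma inter_chain (G F : 'I_n.+1) :
  inter adj G F = -2 * (nat_of_ord G == F)%:R + ((nat_of_ord G).+1 == F)%:R
                  + ((nat_of_ord F).+1 == G)%:R.
Proof.
rewrite /inter /chain_adj; change (G == F) with (nat_of_ord G == nat_of_ord F).
move: (nat_of_ord G) (nat_of_ord F) => g h.
by have [?|?] := eqVneq g h; have [?|?] := eqVneq g.+1 h;
  have [?|?] := eqVneq h.+1 g; rewrite /=; lia.
Qed.

Lemma zdot_chain (a : nat) (Y : 'I_n.+1 -> nat) (F : 'I_n.+1) :
  zdot adj f a Y F = (a * (F == f))%N%:Z - 2 * (Y F)%:Z
    + (if (0 < F)%N then extend Y F.-1 else 0%N)%:Z + (extend Y F.+1)%:Z.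
Proof.
rewrite /zdot -!addrA; congr (_ + _).
under eq_bigr do rewrite inter_chain !mulrDr.
rewrite !big_split /= -addrA; congr (_ + _).
  rewrite -mulNr -(extend_ord Y F) -sum_indicator mulr_sumr.
  by apply: eq_bigr => G _; rewrite mulrCA.
congr (_ + _).
  case E: (nat_of_ord F) => [|h] /=.
    by rewrite big1 // => G _; rewrite mulr0.
  by under eq_bigr do rewrite eqSS; rewrite sum_indicator.
by under eq_bigr do rewrite eq_sym; rewrite sum_indicator.
Qed.

Local Close Scope ring_scope.

Lemma chain_connect (S : {set 'I_n.+1}) (u v : 'I_n.+1) :
  (forall w : 'I_n.+1, minn u v <= w <= maxn u v -> w \in S) ->
  connect (fun a b => [&& a \in S, b \in S & adj a b]) u v.
Proof.
set e := fun a b => _.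
have e_sym : symmetric e.
  by move=> a b; rewrite /e andbCA; congr [&& _, _ & _]; rewrite /chain_adj orbC.
suff up d (u' w : 'I_n.+1) : w = u' + d :> nat ->
    (forall z : 'I_n.+1, u' <= z <= w -> z \in S) -> connect e u' w.
  move=> hS; have [uv|vu] := leqP u v.
    by apply: (up (v - u)); [lia | move=> z hz; apply: hS; lia].
  by rewrite (sym_connect_sym e_sym); apply: (up (u - v) v u);
    [lia | move=> z hz; apply: hS; lia].
elim: d w => [|d IH] w hw hS.
  by rewrite (_ : w = u') ?connect0 //; apply: val_inj; rewrite /= hw addn0.
have ud_lt : u' + d < n.+1 by move: (ltn_ord w); lia.
pose w' : 'I_n.+1 := inord (u' + d).
have w'E : nat_of_ord w' = u' + d by rewrite inordK.
apply: (@connect_trans _ _ w').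
  by apply: IH => // z hz; apply: hS; lia.
apply: connect1; rewrite /e /chain_adj w'E hw addnS eqxx /= andbT.
by apply/andP; split; apply: hS; lia.
Qed.

(* The part of the chain on f's side of a removed vertex x; x = n.+1 (or any
   x > n) removes nothing and x = f leaves nothing. *)
Definition lo (x : nat) : nat := if x < f then x.+1 else 0.
Definition hi (x : nat) : nat := if x < f then n.+1 else x.

Definition segment (a b : nat) : {set 'I_n.+1} := [set F : 'I_n.+1 | a <= F < b].

Definition side (x : nat) : {set 'I_n.+1} :=
  if x == f then set0 else segment (lo x) (hi x).

Lemma compf_avoid (x : nat) : compf adj f [set F | nat_of_ord F != x] = side x.
Proof.
apply/setP => y; rewrite /compf /side !inE.
have [->|xf] := eqVneq x f; first by rewrite inE.
move: (ltn_ord f) (ltn_ord y); rewrite /= /segment inE => fn yn.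
apply/idP/idP.
- have closedI : closed (fun a b => [&& a \in [set F | nat_of_ord F != x],
      b \in [set F | nat_of_ord F != x] & adj a b]) [pred v : 'I_n.+1 | lo x <= v < hi x].
    move=> a b; rewrite !inE /chain_adj /lo /hi /= => /and3P[/eqP ax /eqP bx ab].
    move: (ltn_ord a) (ltn_ord b) => ? ?.
    by case: (ltnP x f) => ?; move: ab => /orP[] /eqP ab; apply/idP/idP; lia.
  move=> /(closed_connect closedI); rewrite !inE => <-.
  by rewrite /lo /hi; case: (ltnP x f); lia.
- move=> y_in; apply: chain_connect => w hw.
  by rewrite inE; move: y_in (ltn_ord w); rewrite /lo /hi; case: (ltnP x f); lia.
Qed.

Section Segment.
Variables (a b : nat).
Hypotheses (a_le_f : a <= f) (f_lt_b : f < b) (b_le_n : b <= n.+1).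
Local Notation c := (tent_height a b f).
Local Notation x := (tent_defect a b f).
Let f_in : a <= f < b. Proof. by rewrite a_le_f f_lt_b. Qed.

Definition tent_cycle (v : 'I_n.+1) : nat := tent a b c v.

Lemma extend_tent (i : nat) : extend tent_cycle i = tent a b c i.
Proof.
rewrite /extend /tent_cycle; case: ifP => hi; first by rewrite inordK.
by rewrite tent_out //; lia.
Qed.

Lemma zdot_tent (F : 'I_n.+1) :
  zdot adj f 1 tent_cycle F =
  (((nat_of_ord F).+1 == a)%:Z + (nat_of_ord F == b)%:Z - (nat_of_ord F == x)%:Z)%R.
Proof.
rewrite zdot_chain !extend_tent mul1n.
have := tent_laplacian f_in F.
rewrite -[F == f]/(nat_of_ord F == nat_of_ord f) /tent_cycle.
by case: (nat_of_ord F) => [|i] /=; lia.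
Qed.

Lemma tent_admissible : admissibleY adj f (segment a b) tent_cycle.
Proof.
split; [|split].
- by move=> v; rewrite inE => hv; apply: tent_out.
- by exists f; rewrite /tent_cycle (tent_at_peak f_in); have := tent_height_gt0 f_in; lia.
- move=> F; rewrite inE => /andP[aF Fb]; rewrite zdot_tent.
  by case: eqP => ?; [lia|]; case: eqP => ?; lia.
Qed.

(* Any admissible cycle, read along the segment, is concave with a kink at f
   and vanishes just outside, so [concave_lb] bounds it below by the tent. *)
Lemma tent_minimal (Y : 'I_n.+1 -> nat) :
  admissibleY adj f (segment a b) Y -> forall v, tent_cycle v <= Y v.
Proof.
move=> [Y_supp [_ Y_neg]] v.
have [v_in|v_out] := boolP (v \in segment a b); last first.
  by rewrite /tent_cycle tent_out //; move: v_out; rewrite inE.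
move: v_in; rewrite inE => /andP[av vb].
pose H j : int := if j is j'.+1 then Posz (extend Y (a + j')) else 0%R.
have H_end : H (b - a).+1 = 0%R.
  rewrite /H /extend; case: ifP => hb //.
  by rewrite Y_supp // inE inordK; lia.
have H_concave j : 1 <= j <= b - a ->
    (H j.-1 + H j.+1 + (j == f.+1 - a)%N%:R <= 2 * H j)%R.
  case: j => [|j] // hj; pose F : 'I_n.+1 := inord (a + j).
  have FE : nat_of_ord F = a + j by rewrite inordK //; lia.
  have := Y_neg F ltac:(rewrite inE FE; lia).
  rewrite zdot_chain FE /= -(extend_ord Y F) FE.
  have -> : (F == f) = (j.+1 == f.+1 - a) by rewrite -val_eqE /= FE; apply/eqP/eqP; lia.
  rewrite /H -addnS; case: j {hj F FE} => [|j] /=.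
    by rewrite addn0 mul1n; case: ifP => _ hY; lia.
  by rewrite addnS /= mul1n => hY; lia.
have := @concave_lb H (b - a) (f.+1 - a) ltac:(lia) ltac:(lia) erefl H_end
  H_concave (v - a).+1 ltac:(lia).
rewrite /H (_ : a + (v - a) = v); last lia.
rewrite natz lez_nat -(extend_ord Y v) => H_lb; apply: leq_trans H_lb.
by apply: (tent_le f_in); lia.
Qed.

Lemma minY_segment (v : 'I_n.+1) : minY adj f (segment a b) v = tent_cycle v.
Proof.
have ne : segment a b != set0 by apply/set0Pn; exists f; rewrite inE; lia.
have ex : exists Y, smallestY adj f (segment a b) Y.
  by exists tent_cycle; split; [exact: tent_admissible | exact: tent_minimal].
rewrite /minY (negbTE ne).
have [Y_adm Y_min] := epsilon_spec (inhabits (fun _ : 'I_n.+1 => 0)) _ ex.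
by apply/eqP; rewrite eqn_leq (Y_min _ tent_admissible v) (tent_minimal Y_adm v).
Qed.
End Segment.

Local Notation state := (state adj f).

(* The multiplicity-sequence iteration on the chain is governed by a single
   defect vertex x: Z^(s).F = -1 if F = x and 0 otherwise (x = n.+1 meaning
   no defect), Gamma^(s+1) is the side of f avoiding x, Y^(s+1) is the tent
   on it, and the new defect is the tent's defect. *)
Definition next_defect (x : nat) : nat :=
  if x == f then n.+1 else tent_defect (lo x) (hi x) f.

Definition mult_at (x : nat) : nat :=
  if x == f then 0 else tent_height (lo x) (hi x) f.

Definition defect_state (s x : nat) : Prop :=
  [/\ x <= n.+1,
      forall F, zdot adj f s (state s).2 F = (- (nat_of_ord F == x)%:Z)%R &
      (state s).1 = side x].

Lemma defect_state0 : defect_state 0 n.+1.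
Proof.
split=> // [F|].
  rewrite /zdot /= mul0n big1 ?addr0 => [|G _]; last by rewrite mul0r.
  by rewrite (_ : (nat_of_ord F == n.+1) = false) //; move: (ltn_ord F); lia.
have nf : (n.+1 < f) = false by apply/negbTE; rewrite -leqNgt ltnW.
rewrite /side ifF; last by apply/negbTE; rewrite neq_ltn ltn_ord orbT.
by apply/setP => F; rewrite /segment /lo /hi nf !inE ltn_ord.
Qed.

Lemma zdot_state_succ s F :
  zdot adj f s.+1 (state s.+1).2 F =
  (zdot adj f s (state s).2 F + zdot adj f 1 (minY adj f (state s).1) F)%R.
Proof. by rewrite -zdot_add addn1. Qed.

Lemma gamma_of_defect s x :
  (forall F, zdot adj f s.+1 (state s.+1).2 F = (- (nat_of_ord F == x)%:Z)%R) ->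
  (state s.+1).1 = side x.
Proof.
move=> hZ; rewrite -compf_avoid; congr (compf _ _ _).
by apply/setP => F; rewrite !inE hZ; case: (nat_of_ord F == x).
Qed.

Lemma side_boundary (x : nat) (F : 'I_n.+1) : x != f -> x <= n.+1 ->
  ((nat_of_ord F).+1 == lo x) + (nat_of_ord F == hi x) = (nat_of_ord F == x).
Proof.
move: (ltn_ord F) (ltn_ord f); rewrite /lo /hi => ? ? /eqP ? ?.
by case: (ltnP x f); lia.
Qed.

Lemma defect_state_succ s x :
  defect_state s x -> defect_state s.+1 (next_defect x) /\ mseq adj f s = mult_at x.
Proof.
move=> [x_le hZ hGam]; rewrite /mseq /next_defect /mult_at hGam /side.
have [xf|xf] := eqVneq x f.
  have Y0 : minY adj f set0 =1 (fun _ => 0) by move=> v; rewrite /minY eqxx.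
  have hZ' F : zdot adj f s.+1 (state s.+1).2 F = (- (nat_of_ord F == n.+1)%:Z)%R.
    rewrite zdot_state_succ hZ hGam /side xf eqxx (zdot_ext _ _ _ _ Y0) /zdot.
    rewrite big1 => [|G _]; last by rewrite mul0r.
    by rewrite -[F == f]/(nat_of_ord F == f); move: (ltn_ord F); lia.
  by rewrite Y0; split=> //; split => //; apply: gamma_of_defect.
have [lo_f f_hi hi_n] : [/\ lo x <= f, f < hi x & hi x <= n.+1].
  by move: (ltn_ord f) xf x_le; rewrite /lo /hi; case: (ltnP x f) => ? ? /eqP ? ?; split; lia.
have Ytent := minY_segment lo_f f_hi hi_n.
split; last by rewrite Ytent /tent_cycle tent_at_peak // lo_f.
have hZ' F : zdot adj f s.+1 (state s.+1).2 F =
    (- (nat_of_ord F == tent_defect (lo x) (hi x) f)%:Z)%R.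
  rewrite zdot_state_succ hZ hGam /side (negbTE xf) (zdot_ext _ _ _ _ Ytent) zdot_tent //.
  by have := side_boundary F xf x_le; lia.
split=> //; last exact: gamma_of_defect.
by rewrite /tent_defect; case: ifP; lia.
Qed.

Definition defect (s : nat) : nat := iter s next_defect n.+1.

Lemma defect_state_iter s : defect_state s (defect s).
Proof.
by elim: s => [|s IH]; [exact: defect_state0 | exact: (defect_state_succ IH).1].
Qed.

Lemma mseq_defect s : mseq adj f s = mult_at (defect s).
Proof. exact: (defect_state_succ (defect_state_iter s)).2. Qed.

Lemma defect_add j s : defect (j + s) = iter j next_defect (defect s).
Proof. exact: iterD. Qed.

Lemma next_defect_at_f : next_defect f = n.+1.
Proof. by rewrite /next_defect eqxx. Qed.

Lemma mult_at_f : mult_at f = 0.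
Proof. by rewrite /mult_at eqxx. Qed.

Lemma next_defect_above x : f < x ->
  next_defect x = if f.+1 <= x - f then x - f.+1 else x - f - 1.
Proof.
move=> fx; rewrite /next_defect /tent_defect /lo /hi ifF; last lia.
by have /negbTE -> : ~~ (x < f) by rewrite -leqNgt ltnW.
Qed.

Lemma mult_at_above x : f < x -> mult_at x = minn f.+1 (x - f).
Proof.
move=> fx; rewrite /mult_at /tent_height /lo /hi ifF; last lia.
by have /negbTE -> : ~~ (x < f) by rewrite -leqNgt ltnW.
Qed.

Lemma next_defect_below x : x < f ->
  next_defect x = if f - x <= n.+1 - f then n.+1 - (f - x) else x + n.+1 - f.
Proof.
move=> xf; rewrite /next_defect /tent_defect /lo /hi ifF; last lia.
by rewrite xf subSS; case: ifP; move: (ltn_ord f); lia.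
Qed.

Lemma mult_at_below x : x < f -> mult_at x = minn (f - x) (n.+1 - f).
Proof.
move=> xf; rewrite /mult_at /tent_height /lo /hi ifF; last lia.
by rewrite xf subSS.
Qed.

(* Far above f (at distance more than f) the defect moves down by k = f.+1
   and the multiplicity is k: this produces the runs k^l. *)
Lemma iter_next_far j x : j * f.+1 + f <= x ->
  iter j next_defect x = x - j * f.+1.
Proof.
elim: j => [|j IH] hx; first by rewrite subn0.
rewrite iterS IH; last by move: hx; rewrite mulSn; lia.
rewrite next_defect_above; last by move: hx; rewrite mulSn; lia.
by move: hx; rewrite mulSn; case: ifP; lia.
Qed.

Lemma mseq_far s j : j.+1 * f.+1 + f <= defect s -> mseq adj f (j + s) = f.+1.
Proof.
move=> hs; rewrite mseq_defect defect_add iter_next_far; last by move: hs; rewrite mulSn; lia.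
by rewrite mult_at_above; move: hs; rewrite mulSn; lia.
Qed.

(* Case k = 1: the defect walks down the chain one vertex at a time and
   restarts after reaching f, giving the period (1^(n+1), 0). *)
Lemma mseq_periodic (f0 : nat_of_ord f = 0) s :
  mseq adj f s = if s.+1 %% n.+2 == 0 then 0 else 1.
Proof.
have walk r : r <= n.+1 -> defect r = n.+1 - r.
  by move=> hr; rewrite /defect iter_next_far f0; lia.
have period q : defect (q * n.+2) = n.+1.
  elim: q => [|q IH] //; rewrite mulSn defect_add IH iterS.
  by rewrite -/(defect n.+1) walk // subnn -f0 next_defect_at_f.
have r_lt := ltn_pmod s (ltn0Sn n.+1).
rewrite mseq_defect {1}(divn_eq s n.+2) addnC defect_add period -/(defect _) walk; last lia.
rewrite -[s.+1]addn1 -modnDml; move: r_lt; set r := s %% n.+2 => r_lt.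
have [->|r_ne] := eqVneq r n.+1.
  by have := mult_at_f; rewrite f0 subnn addn1 modnn eqxx.
rewrite modn_small; last lia.
by rewrite addn1 /= mult_at_above f0; lia.
Qed.

Lemma mseq_first_run l r : n.+1 = l * f.+1 + r + f -> r <= f ->
  [/\ forall s, s < l -> mseq adj f s = f.+1, defect l = r + f &
      mseq adj f l = r].
Proof.
move=> hn hr.
have hl : defect l = r + f by rewrite /defect iter_next_far; lia.
split=> //.
  move=> s hs; rewrite -[s]addn0 mseq_far //.
  by have := leq_mul hs (leqnn f.+1); rewrite /defect /=; lia.
rewrite mseq_defect hl; case: (posnP r) => [->|r_gt0]; first exact: mult_at_f.
by rewrite mult_at_above; lia.
Qed.

Lemma mseq_after_full_run s : 0 < f -> defect s = f + f ->
  defect s.+1 = f.-1 /\ mseq adj f s.+1 = 1.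
Proof.
move=> f_gt0 hs.
have next : defect s.+1 = f.-1.
  by rewrite -addn1 addnC defect_add /= hs next_defect_above; [case: ifP|]; lia.
split=> //; rewrite mseq_defect next mult_at_below; move: (ltn_ord f); lia.
Qed.

(* For k = 2 and n.+1 = 2 l + 2, the defect at 0 jumps to the top of the
   chain and a second run 2^l, 0 follows. *)
Lemma mseq_second_run (f1 : nat_of_ord f = 1) l s : n = l.*2.+1 ->
  defect s = 0 ->
  (forall j, j < l -> mseq adj f (j + s.+1) = 2) /\ mseq adj f (l + s.+1) = 0.
Proof.
move=> hn hs.
have top : defect s.+1 = n.
  by rewrite -addn1 addnC defect_add /= hs next_defect_below f1; [case: ifP|]; lia.
split=> [j hj|].
  by rewrite mseq_far f1 // top; lia.
rewrite mseq_defect defect_add top iter_next_far f1; last lia.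
by rewrite (_ : n - l * 2 = f) ?mult_at_f //; lia.
Qed.
End Chain.

Unset Implicit Arguments.

Theorem proposition6 (n k : nat) (f : 'I_n) :
  (1 <= k)%N -> (2 * k - 1 <= n)%N -> nat_of_ord f = k.-1 ->
  let m := mseq (@chain_adj n) f in
  (k = 1%N -> forall s, m s = (if (s.+1 %% n.+1 == 0)%N then 0%N else 1%N)) /\
  ((2 <= k)%N -> forall l r, (1 <= l)%N -> (r <= k - 1)%N ->
     n = (l * k + r + (k - 1))%N ->
     ((r < k - 1)%N -> (forall s, (s < l)%N -> m s = k) /\ m l = r) /\
     (r = (k - 1)%N -> (3 <= k)%N ->
        (forall s, (s < l)%N -> m s = k) /\ m l = (k - 1)%N /\ m l.+1 = 1%N) /\
     (k = 2%N -> r = 1%N ->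
        (forall s, (s < l)%N -> m s = 2%N) /\ m l = 1%N /\ m l.+1 = 1%N /\
        (forall s, (l.+2 <= s < l.+2 + l)%N -> m s = 2%N) /\ m (l.+2 + l)%N = 0%N)).
Proof.
case: n f => [|n] f; first by case: f.
move=> k_gt0 _ fk m; rewrite {}/m; have -> : k = f.+1 by lia.
split=> [k1 s|k_ge2 l r l_gt0 r_le hn]; first by apply: mseq_periodic; lia.
have [run defect_l mseq_l] := @mseq_first_run n f l r ltac:(lia) ltac:(lia).
have full : r = f -> 0 < f -> mseq (@chain_adj n.+1) f l.+1 = 1.
  by move=> rf f_gt0; apply: (@mseq_after_full_run n f l f_gt0 ltac:(lia)).2.
split; first by move=> _; split.
split; first by move=> rf _; split=> //; split; [lia | apply: full; lia].
move=> k2 r1; have f1 : nat_of_ord f = 1 by lia.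
have [defect_l1 _] := @mseq_after_full_run n f l ltac:(lia) ltac:(lia).
have [run2 mseq_end] := @mseq_second_run n f f1 l l.+1 ltac:(lia) ltac:(lia).
split; first by move=> s /run; lia.
split; first by rewrite mseq_l.
split; first by apply: full; lia.
split; last by rewrite addnC.
by move=> s hs; rewrite -(subnK (proj1 (andP hs))) run2; lia.
Qed.
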